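(* Let $n\in\mathbb N$ and let $\mathbf w_n$ be the word \[ \mathbf w_n=\biggl(\prod_{i=1}^n z_it_i\biggr)\,x\,\biggl(\prod_{i=1}^n z_iy_i^{(n)}\biggr)\,x\,\biggl(\prod_{j=1}^n\biggl(\prod_{i=1}^n y_i^{(n-j)}y_i^{(n+1-j)}\biggr)\biggr). \] Then for each $1\le i\le n$ and $0\le k\le n$ we have $D(\mathbf w_n,x)=n+1$, $D(\mathbf w_n, y_i^{(k)})=k$, $D(\mathbf w_n,t_i)=0$ and $D(\mathbf w_n,z_i)=1$.
   Context: Words are elements of the free monoid over a countably infinite alphabet. In $\mathbf w_n$, the letters $x$, $z_i$, $t_i$ ($1\le i\le n$), and $y_i^{(k)}$ ($1\le i\le n$, $0\le k\le n$) are pairwise distinct, and products $\prod_{i=1}^n$ are taken in increasing order of the index. A letter is simple in a word $\mathbf w$ if it occurs exactly once in $\mathbf w$. For a letter $x$ occurring in $\mathbf w$, ${_{i\mathbf w}}x$ denotes the $i$th occurrence of $x$ in $\mathbf w$. The depth $D(\mathbf w,x)$ of a letter $x$ in $\mathbf w$ is defined inductively: the letters of depth $0$ are exactly the simple letters of $\mathbf w$; a letter $x$ has depth $k\ge1$ if it does not have depth less than $k$ and there is the first occurrence of some letter of depth $k-1$ between ${_{1\mathbf w}}x$ and ${_{2\mathbf w}}x$ in $\mathbf w$; if for no $n\ge0$ is there a first occurrence of a letter of depth $n$ between ${_{1\mathbf w}}x$ and ${_{2\mathbf w}}x$, the depth of $x$ is $\infty$. *)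

From mathcomp Require Import all_boot.
Set Implicit Arguments. Unset Strict Implicit. Unset Printing Implicit Defensive.

Definition letter := (nat * nat * nat)%type.
Definition word := seq letter.

Definition lx : letter := (0, 0, 0).
Definition lz (i : nat) : letter := (1, i, 0).
Definition ltt (i : nat) : letter := (2, i, 0).
Definition ly (i k : nat) : letter := (3, i, k).

Definition simple (w : word) (x : letter) : bool := count_mem x w == 1.

Definition occ1 (w : word) (x : letter) : nat := index x w.
Definition has_occ2 (w : word) (x : letter) : bool :=
  x \in drop (occ1 w x).+1 w.
(* position of the second occurrence of x in w (meaningful if has_occ2) *)
Definition occ2 (w : word) (x : letter) : nat :=
  (occ1 w x).+1 + index x (drop (occ1 w x).+1 w).

Definition first_between (w : word) (y x : letter) : bool :=
  has_occ2 w x && (occ1 w x < occ1 w y < occ2 w x).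

(* depth_info w k = (fun x => D(w,x) < k , fun x => D(w,x) = k),
   following the inductive definition of depth literally. *)
Fixpoint depth_info (w : word) (k : nat) : (pred letter * pred letter) :=
  match k with
  | 0 => (fun _ => false, fun x => simple w x)
  | k'.+1 =>
      let: (lt', eq') := depth_info w k' in
      let ltk := fun x => lt' x || eq' x in
      (ltk, fun x => ~~ ltk x && has (fun y => eq' y && first_between w y x) w)
  end.

Definition has_depth (w : word) (x : letter) (k : nat) : Prop :=
  (depth_info w k).2 x.

Definition w_ (n : nat) : word :=
  flatten [seq [:: lz i; ltt i] | i <- iota 1 n]
  ++ [:: lx]
  ++ flatten [seq [:: lz i; ly i n] | i <- iota 1 n]
  ++ [:: lx]
  ++ flatten [seq flatten [seq [:: ly i (n - j); ly i (n + 1 - j)] | i <- iota 1 n]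
             | j <- iota 1 n].

From mathcomp Require Import all_boot zify.

(* Depth can be checked locally: if d vanishes exactly on the simple letters
   and, for every other letter x, the least value of d over the letters whose
   first occurrence lies between the two occurrences of x is d x - 1, then d is
   the depth.  For w_n take d x = n + 1, d z_i = 1, d t_i = 0, d y_i^(k) = k.
   Between the occurrences of x first appear the y_i^(n); between those of z_i,
   t_i.  Reading the last factor as rungs of levels n-1, ..., 0, the rung of
   level k having cells y_i^(k) y_i^(k+1), the letter y_i^(k) with k >= 1 occurs
   in rung k (in the middle factor if k = n) and again in rung k-1, so what lies
   in between has level >= k-1, with y_i^(k-1) attaining it. *)

Set Implicit Arguments.
Unset Strict Implicit.
Unset Printing Implicit Defensive.

Section Blocks.

Variables (T : Type) (f : nat -> seq T).

Definition blocks (a m : nat) : seq T := flatten [seq f j | j <- iota a m].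

Lemma blocks_split m i : 1 <= i <= m ->
  blocks 1 m = blocks 1 i.-1 ++ f i ++ blocks i.+1 (m - i).
Proof.
move=> hi; rewrite /blocks {1}(_ : m = i.-1 + (m - i).+1); last by lia.
by rewrite iotaD map_cat flatten_cat add1n prednK //; case/andP: hi.
Qed.

End Blocks.

Lemma mem_blocks (T : eqType) (f : nat -> seq T) a m y :
  reflect (exists2 j, a <= j < a + m & y \in f j) (y \in blocks f a m).
Proof.
by apply: (iffP flatten_mapP) => -[j]; rewrite ?mem_iota; exists j; rewrite ?mem_iota.
Qed.

Lemma has_occ2_mem (w : word) (x : letter) : has_occ2 w x -> x \in w.
Proof. exact: mem_drop. Qed.

Lemma simple_cat (P R : word) (x : letter) :
  x \notin P -> x \notin R -> simple (P ++ x :: R) x.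
Proof.
by move=> /count_memPn xP /count_memPn xR; rewrite /simple count_cat /= xP xR eqxx.
Qed.

Lemma simple_cat2 (P Q R : word) (x : letter) : simple (P ++ x :: Q ++ x :: R) x = false.
Proof. by apply/negbTE/eqP; rewrite count_cat /= count_cat /= eqxx; lia. Qed.

Lemma first_between_cat (P Q R : word) (x y : letter) : x \notin P -> x \notin Q ->
  first_between (P ++ x :: Q ++ x :: R) y x = [&& y \in Q, y \notin P & y != x].
Proof.
move=> xP xQ; rewrite /first_between /has_occ2 /occ2 /occ1.
have -> : index x (P ++ x :: Q ++ x :: R) = size P.
  by rewrite index_cat (negbTE xP) /= eqxx addn0.
rewrite -cat_rcons drop_size_cat ?size_rcons // mem_cat inE eqxx orbT /=.
have -> : index x (Q ++ x :: R) = size Q.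
  by rewrite index_cat (negbTE xQ) /= eqxx addn0.
rewrite cat_rcons index_cat; have [yP|yP] /= := boolP (y \in P).
  by rewrite andbF ltnNge ltnW // index_mem.
have [->|yx] := eqVneq y x; first by rewrite andbF addn0 ltnn.
rewrite index_cat andbT; have [yQ|yQ] /= := boolP (y \in Q).
  by rewrite addnS ltnS leq_addr addSn ltnS /= ltn_add2l index_mem.
by rewrite addnS ltnS leq_addr addSn ltnS /= ltn_add2l ltnNge leq_addr.
Qed.

Section Certificate.

Variables (w : word) (d : letter -> nat).

Definition depth_certificate (x : letter) : Prop :=
  [/\ simple w x = (d x == 0),
      0 < d x -> exists2 y, y \in w & first_between w y x && (d y == (d x).-1)
    & forall y, first_between w y x -> (d x).-1 <= d y].

Hypothesis certified : {in w, forall x, depth_certificate x}.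

Lemma depth_infoE k :
  (depth_info w k).1 =1 (fun x => (x \in w) && (d x < k)) /\
  (depth_info w k).2 =1 (fun x => (x \in w) && (d x == k)).
Proof.
elim: k => [|k IH] /=.
  split=> x; first by rewrite ltn0 andbF.
  have [xw|xw] /= := boolP (x \in w); first by case: (certified xw).
  by apply/negbTE; rewrite /simple (count_memPn xw).
case: (depth_info w k) IH => lt eq /= [ltE eqE].
have ltSE x : lt x || eq x = (x \in w) && (d x < k.+1).
  by rewrite ltE eqE -andb_orr orbC -leq_eqVlt ltnS.
split=> x; rewrite ltSE //.
have [xw|xw] /= := boolP (x \in w); last first.
  apply/hasPn => y _; apply/negP => /andP[_ /andP[/has_occ2_mem xw' _]].
  by rewrite xw' in xw.
have [_ below lower] := certified xw.
rewrite -leqNgt; case: (ltngtP (d x) k.+1) => [dx|dx|dx] /=.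
- by [].
- apply/negbTE/hasPn => y yw; rewrite eqE.
  by apply/negP => /andP[/andP[_ /eqP dy] /lower]; rewrite dy; lia.
- have [|y yw /andP[fyx /eqP dy]] := below; first by rewrite dx.
  by apply/hasP; exists y; rewrite // eqE yw fyx dy dx eqxx.
Qed.

Lemma certificate_mem x : depth_certificate x -> x \in w.
Proof.
case=> [simple_x below _].
have [dx0|/below[y _ /andP[/andP[/has_occ2_mem //]]]] := posnP (d x).
by rewrite -has_pred1 has_count; move: simple_x; rewrite dx0 eqxx => /eqP ->.
Qed.

Lemma has_depth_certified x : depth_certificate x -> has_depth w x (d x).
Proof.
move=> cx; rewrite /has_depth; have [_ ->] := depth_infoE (d x).
by rewrite (certificate_mem cx) eqxx.
Qed.

End Certificate.

Lemma certificate_once (d : letter -> nat) (P R : word) (x : letter) :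
  x \notin P -> x \notin R -> d x = 0 -> depth_certificate (P ++ x :: R) d x.
Proof. by move=> xP xR dx0; split; rewrite ?dx0 ?simple_cat. Qed.

Lemma certificate_twice (d : letter -> nat) (x y : letter) (P Q R : word) :
    x \notin P -> x \notin Q -> 0 < d x ->
    [&& y \in Q, y \notin P & y != x] -> d y = (d x).-1 ->
    (forall z, z \in Q -> z \notin P -> z != x -> (d x).-1 <= d z) ->
  depth_certificate (P ++ x :: Q ++ x :: R) d x.
Proof.
move=> xP xQ dx_gt0 fresh_y dy lower; split.
- by rewrite simple_cat2; case: (d x) dx_gt0.
- move=> _; exists y; last by rewrite first_between_cat // fresh_y dy eqxx.
  by case/and3P: fresh_y => yQ _ _; rewrite mem_cat inE mem_cat yQ !orbT.
- by move=> z; rewrite first_between_cat // => /and3P[]; apply: lower.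
Qed.

Section WordW.

Variable n : nat.

Definition cell_A (i : nat) : word := [:: lz i; ltt i].
Definition cell_B (i : nat) : word := [:: lz i; ly i n].
Definition cell_C (k i : nat) : word := [:: ly i k; ly i k.+1].

Definition row_A : word := blocks cell_A 1 n.
Definition row_B : word := blocks cell_B 1 n.
Definition rung (k : nat) : word := blocks (cell_C k) 1 n.

Fixpoint rungs (k m : nat) : word :=
  if m is m'.+1 then rung (k + m') ++ rungs k m' else [::].

Lemma rungs_add k m p : rungs k (m + p) = rungs (k + p) m ++ rungs k p.
Proof. by elim: m => //= m ->; rewrite catA addnAC addnA. Qed.

Lemma mem_rungs k m y : y \in rungs k m ->
  exists j l, [/\ y == ly j l, 1 <= j <= n & k <= l <= k + m].
Proof.
elim: m => //= m IH; rewrite mem_cat => /orP[/mem_blocks[j hj]|/IH[j [l [yE hj hl]]]].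
  by rewrite !inE => /orP[] yE; [exists j, (k + m) | exists j, (k + m).+1]; split; lia.
by exists j, l; split; lia.
Qed.

Lemma rungs_from_top c m :
  flatten [seq blocks (fun i => [:: ly i (c + m - j); ly i (c + m + 1 - j)]) 1 n
          | j <- iota c.+1 m] = rungs 0 m.
Proof.
by elim: m c => // m IH c; rewrite -addSnnS /= IH -addnA !addKn addn1.
Qed.

Lemma w_E : w_ n = row_A ++ lx :: row_B ++ lx :: rungs 0 n.
Proof. by rewrite -(rungs_from_top 0). Qed.

Definition depth_w (y : letter) : nat :=
  match y with
  | (0, _, _) => n.+1
  | (1, _, _) => 1
  | (2, _, _) => 0
  | (_, _, k) => k
  end.

(* Splits [H : y \in s], for s assembled from the pieces of w_n, into one case
   per letter of s, substituting y when it is a variable. *)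
Ltac case_mem H :=
  unfold row_A, row_B, rung, cell_A, cell_B, cell_C in H;
  repeat match type of H with
  | is_true (_ \in _ ++ _) => rewrite mem_cat in H
  | is_true (_ \in _ :: _) => rewrite in_cons in H
  | is_true (_ \in [::]) => by rewrite in_nil in H
  | is_true (_ || _) => case/orP: H => H
  | is_true (_ \in blocks _ _ _) =>
      case/mem_blocks: H => ? ? H; unfold cell_A, cell_B, cell_C in H
  | is_true (_ \in rungs _ _) => case/mem_rungs: H => ? [? [H ? ?]]
  | is_true (?y == _) => is_var y; move/eqP: H => H; subst y
  end.

Ltac absent := let H := fresh in apply/negP => H; case_mem H;
  unfold lx, lz, ltt, ly in H; rewrite ?xpair_eqE in H; lia.

Lemma lz_in_row_A j : 1 <= j <= n -> lz j \in row_A.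
Proof. by move=> hj; apply/mem_blocks; exists j; rewrite ?inE ?eqxx //; lia. Qed.

Lemma w_split_rung k i : k < n -> 1 <= i <= n ->
  w_ n = (row_A ++ lx :: row_B ++ lx :: rungs k.+1 (n - k.+1) ++ blocks (cell_C k) 1 i.-1)
         ++ ly i k :: ly i k.+1 :: blocks (cell_C k) i.+1 (n - i) ++ rungs 0 k.
Proof.
move=> lt_k_n hi; rewrite w_E -{1}(subnK lt_k_n) rungs_add /= !add0n.
by rewrite /rung (blocks_split _ hi); repeat rewrite -catA /=.
Qed.

Lemma certificate_lx : 0 < n -> depth_certificate (w_ n) depth_w lx.
Proof.
move=> n_gt0; rewrite w_E; apply: (certificate_twice (y := ly 1 n)) => //.
- by absent.
- by absent.
- apply/and3P; split=> //; last by absent.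
  by apply/mem_blocks; exists 1; rewrite ?inE ?eqxx ?orbT //; lia.
- move=> z zB zA _; case_mem zB => //.
  by rewrite lz_in_row_A in zA; lia.
Qed.

Lemma certificate_lz i : 1 <= i <= n -> depth_certificate (w_ n) depth_w (lz i).
Proof.
move=> hi; have -> : w_ n = blocks cell_A 1 i.-1 ++ lz i ::
    (ltt i :: blocks cell_A i.+1 (n - i) ++ lx :: blocks cell_B 1 i.-1) ++ lz i ::
    ly i n :: blocks cell_B i.+1 (n - i) ++ lx :: rungs 0 n.
  by rewrite w_E /row_A /row_B !(blocks_split _ hi); repeat rewrite -catA /=.
apply: (certificate_twice (y := ltt i)) => //; try by absent.
by apply/and3P; split; [rewrite inE eqxx | absent | absent].
Qed.

Lemma certificate_ltt i : 1 <= i <= n -> depth_certificate (w_ n) depth_w (ltt i).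
Proof.
move=> hi; have -> : w_ n = (blocks cell_A 1 i.-1 ++ [:: lz i]) ++ ltt i ::
    blocks cell_A i.+1 (n - i) ++ lx :: row_B ++ lx :: rungs 0 n.
  by rewrite w_E /row_A (blocks_split _ hi); repeat rewrite -catA /=.
by apply: certificate_once => //; absent.
Qed.

Lemma certificate_ly_bottom i : 1 <= i <= n -> depth_certificate (w_ n) depth_w (ly i 0).
Proof.
move=> hi; rewrite (@w_split_rung 0 i) //= ?cats0; last by lia.
by apply: certificate_once => //; absent.
Qed.

Lemma certificate_ly_top i : 1 <= i <= n -> depth_certificate (w_ n) depth_w (ly i n).
Proof.
move=> hi; have [k n_eq] : exists k, n = k.+1 by exists n.-1; lia.
have -> : w_ n = (row_A ++ lx :: blocks cell_B 1 i.-1 ++ [:: lz i]) ++ ly i n ::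
    (blocks cell_B i.+1 (n - i) ++ lx :: blocks (cell_C k) 1 i.-1 ++ [:: ly i k]) ++ ly i n ::
    blocks (cell_C k) i.+1 (n - i) ++ rungs 0 k.
  have rungsE : rungs 0 n = rung k ++ rungs 0 k by rewrite n_eq.
  have cellE : cell_C k i = [:: ly i k; ly i n] by rewrite n_eq.
  rewrite w_E rungsE /row_B /rung !(blocks_split _ hi) cellE.
  by repeat rewrite -catA /=.
apply: (certificate_twice (y := ly i k)); rewrite /= ?n_eq //; try by absent.
- by apply/and3P; split; [rewrite !(mem_cat, inE) eqxx !orbT | absent | absent].
- move=> z zQ zP _; case_mem zQ; rewrite /= ?n_eq; try lia.
  by rewrite mem_cat lz_in_row_A in zP; lia.
Qed.

Lemma certificate_ly_mid i k : 1 <= i <= n -> k.+1 < n ->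
  depth_certificate (w_ n) depth_w (ly i k.+1).
Proof.
move=> hi hk; have -> : w_ n =
    (row_A ++ lx :: row_B ++ lx :: rungs k.+2 (n - k.+2) ++ blocks (cell_C k.+1) 1 i.-1)
    ++ ly i k.+1 :: (ly i k.+2 :: blocks (cell_C k.+1) i.+1 (n - i) ++
                     blocks (cell_C k) 1 i.-1 ++ [:: ly i k])
    ++ ly i k.+1 :: blocks (cell_C k) i.+1 (n - i) ++ rungs 0 k.
  rewrite (w_split_rung hk hi) /= add0n /rung (blocks_split _ hi).
  by repeat rewrite -catA /=.
apply: (certificate_twice (y := ly i k)) => //; try by absent.
- by apply/and3P; split; [rewrite !(mem_cat, inE) eqxx !orbT | absent | absent].
- by move=> z zQ _ _; case_mem zQ; rewrite /=; lia.
Qed.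

Lemma certificate_ly i k : 1 <= i <= n -> k <= n -> depth_certificate (w_ n) depth_w (ly i k).
Proof.
move=> hi; case: k => [_|k]; first exact: certificate_ly_bottom.
rewrite leq_eqVlt => /orP[/eqP ->|hk]; first exact: certificate_ly_top.
exact: certificate_ly_mid.
Qed.

Lemma certificate_w : 0 < n -> {in w_ n, forall x, depth_certificate (w_ n) depth_w x}.
Proof.
move=> n_gt0 x; rewrite [in _ \in _]w_E => xw; case_mem xw; try exact: certificate_lx.
all: first [apply: certificate_lz | apply: certificate_ltt | apply: certificate_ly]; lia.
Qed.

End WordW.

Theorem lemma2 (n : nat) : 1 <= n ->
  [/\ has_depth (w_ n) lx n.+1,
      (forall i k, 1 <= i <= n -> k <= n -> has_depth (w_ n) (ly i k) k),
      (forall i, 1 <= i <= n -> has_depth (w_ n) (ltt i) 0)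
    & (forall i, 1 <= i <= n -> has_depth (w_ n) (lz i) 1)].
Proof.
move=> n_gt0; have depth := has_depth_certified (certificate_w n_gt0).
split=> [|i k hi hk|i hi|i hi].
- exact: depth (certificate_lx n_gt0).
- exact: depth (certificate_ly hi hk).
- exact: depth (certificate_ltt hi).
- exact: depth (certificate_lz hi).
Qed.
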